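(* Let $f:D^n\to\mathbb{R}^d$ have finite global sensitivity $GS_f>0$, let $T\in\mathbb{R}$, and let $U=\{x\in D^n: LS_f(x)>T\}$, assumed nonempty. For $x\in D^n$ let $ud(x)=\min_{y\in U}d(y,x)$. Let $\beta>0$ satisfy $$\beta\le\min_{x\notin U}\frac{1}{ud(x)}\ln\Big(\frac{GS_f}{LS_f(x)}\Big)$$ (with the convention $\ln(GS_f/0)=+\infty$). Then $S(x)=GS_f\cdot e^{-\beta\cdot ud(x)}$ is a $\beta$-smooth upper bound on the local sensitivity of $f$.
   Context: $D^n$ denotes the set of datasets consisting of $n$ elements; Hamming distance $d(x,y)=|\{i:x_i\neq y_i\}|$; neighbors satisfy $d(x,y)=1$. Global sensitivity: $GS_f=\max_{x,y:d(x,y)=1}\|f(x)-f(y)\|_1$. Local sensitivity: $LS_f(x)=\max_{y:d(x,y)=1}\|f(x)-f(y)\|_1$. For $\beta>0$, $S:D^n\to\mathbb{R}$ is a $\beta$-smooth upper bound on the local sensitivity of $f$ if $S(x)\ge LS_f(x)$ for all $x$ and $S(x)\le e^{\beta}S(y)$ for all $x,y$ with $d(x,y)=1$. *)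

From HB Require Import structures.
From mathcomp Require Import all_boot all_order all_algebra.
From mathcomp Require Import all_classical all_reals all_analysis.
Set Implicit Arguments. Unset Strict Implicit. Unset Printing Implicit Defensive.
Import Order.TTheory GRing.Theory Num.Theory.
Local Open Scope classical_set_scope.
Local Open Scope ring_scope.

Definition hdist (D : eqType) (n : nat) (x y : 'I_n -> D) : nat :=
  #|[pred i | x i != y i]|.

Definition l1dist (R : realType) (d : nat) (u v : 'I_d -> R) : R :=
  \sum_(i < d) `|u i - v i|.

Definition GS_set (R : realType) (D : eqType) (n d : nat)
  (f : ('I_n -> D) -> 'I_d -> R) : set R :=
  [set r | exists x y, hdist x y = 1%N /\ r = l1dist (f x) (f y)].

Definition GS (R : realType) (D : eqType) (n d : nat)
  (f : ('I_n -> D) -> 'I_d -> R) : R := sup (GS_set f).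

Definition LS (R : realType) (D : eqType) (n d : nat)
  (f : ('I_n -> D) -> 'I_d -> R) (x : 'I_n -> D) : R :=
  sup [set r | exists y, hdist x y = 1%N /\ r = l1dist (f x) (f y)].

Definition smooth_ub (R : realType) (D : eqType) (n d : nat)
  (f : ('I_n -> D) -> 'I_d -> R) (beta : R) (S : ('I_n -> D) -> R) : Prop :=
  (forall x, LS f x <= S x) /\
  (forall x y, hdist x y = 1%N -> S x <= expR beta * S y).

(* ud(x) = min_{y in U} d(y,x), as a real number (the min of a set of
   naturals, hence attained when U is nonempty). *)
Definition ud (R : realType) (D : eqType) (n : nat) (U : set ('I_n -> D))
  (x : 'I_n -> D) : R :=
  inf [set (hdist y x)%:R | y in U].
Arguments ud {R D n} U x.

From HB Require Import structures.
From mathcomp Require Import all_boot all_order all_algebra.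
From mathcomp Require Import all_classical all_reals all_analysis.
From mathcomp Require Import lra.
Import Order.TTheory GRing.Theory Num.Theory.
Local Open Scope classical_set_scope.
Local Open Scope ring_scope.

(* Inside U the bound is GS itself.  Outside U, the hypothesis on beta says
   exactly that GS * exp(-beta ud(x)) >= LS(x), once LS(x) <= GS is known.
   Smoothness holds because ud is 1-Lipschitz for the Hamming distance, so
   moving to a neighbour changes the exponent by at most beta. *)

Lemma hdistxx {D : eqType} {n : nat} (x : 'I_n -> D) : hdist x x = 0%N.
Proof. by apply: eq_card0 => i; rewrite !inE eqxx. Qed.

Lemma hdist_triangle {D : eqType} {n : nat} (x y z : 'I_n -> D) :
  (hdist z y <= hdist z x + hdist x y)%N.
Proof.
rewrite /hdist -cardUI; apply: leq_trans (leq_addr _ _).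
apply: (@subset_leq_card _ [pred i | z i != y i]).
apply/fintype.subsetP => i; rewrite !inE /=.
by case: (eqVneq (z i) (x i)) => [->|] //= _ ->; rewrite orbT.
Qed.

Section UpperDistance.
Context {R : realType} {D : eqType} {n : nat} {U : set ('I_n -> D)}.

Lemma ud_ge0 x : U !=set0 -> 0 <= ud U x :> R.
Proof.
case=> y Uy; apply: lb_le_inf; first by exists (hdist y x)%:R, y.
by move=> r [z _ <-].
Qed.

Lemma ud_le_hdist x z : U z -> ud U x <= (hdist z x)%:R :> R.
Proof.
move=> Uz; apply: ge_inf; last by exists z.
by exists 0 => r [w _ <-].
Qed.

Lemma ud_eq0 x : U x -> ud U x = 0 :> R.
Proof.
move=> Ux; apply/eqP; rewrite eq_le ud_ge0; last by exists x.
by rewrite andbT (le_trans (ud_le_hdist x x Ux)) // hdistxx.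
Qed.

Lemma ud_neighbour_le x y :
  U !=set0 -> hdist x y = 1%N -> ud U y <= ud U x + 1 :> R.
Proof.
move=> [z0 Uz0] hxy; rewrite -lerBlDr.
apply: lb_le_inf; first by exists (hdist z0 x)%:R, z0.
move=> r [z Uz <-]; rewrite lerBlDr.
apply: le_trans (ud_le_hdist y z Uz) _.
by have := hdist_triangle x y z; rewrite hxy -(ler_nat R) natrD.
Qed.

End UpperDistance.

Lemma LS_le_GS (R : realType) (D : eqType) (n d : nat)
    (f : ('I_n -> D) -> 'I_d -> R) x :
  has_ubound (GS_set f) -> 0 <= GS f -> LS f x <= GS f.
Proof.
move=> hub GS_ge0; rewrite /LS; set E := [set r | _].
have [[r0 Er0]|E0] := pselect (E !=set0).
  apply: ge_sup; first by exists r0.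
  by move=> r [y [hy ->]]; apply: ub_le_sup => //; exists x, y.
suff -> : E = set0 by rewrite sup0.
by apply/seteqP; split => // r Er; apply: E0; exists r.
Qed.

Lemma le_mul_expRN (R : realType) (G l b u : R) :
  0 < G -> 0 < l -> 0 <= u -> 0 < b -> b <= u^-1 * ln (G / l) ->
  l <= G * expR (- (b * u)).
Proof.
move=> G_gt0 l_gt0 u_ge0 b_gt0 hb.
have u_gt0 : 0 < u.
  rewrite lt_neqAle u_ge0 andbT; apply/negP => /eqP u0.
  by move: hb; rewrite -u0 invr0 mul0r leNgt b_gt0.
have exp_le : expR (b * u) <= G / l.
  rewrite -[X in _ <= X]lnK ?posrE ?divr_gt0 // ler_expR.
  by rewrite -ler_pdivlMr // mulrC.
by rewrite expRN ler_pdivlMr ?expR_gt0 // mulrC -ler_pdivlMr.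
Qed.

Theorem theorem5 (R : realType) (D : eqType) (n d : nat)
  (f : ('I_n -> D) -> 'I_d -> R) (T beta : R) :
  has_ubound (GS_set f) ->
  0 < GS f ->
  let U := [set x | T < LS f x] in
  U !=set0 ->
  0 < beta ->
  (forall x, ~ U x -> 0 < LS f x ->
     beta <= (ud U x)^-1 * ln (GS f / LS f x)) ->
  smooth_ub f beta (fun x => GS f * expR (- (beta * ud U x))).
Proof.
move=> hub GS_gt0 U U0 beta_gt0 hbeta; split=> [x|x y hxy].
- have [Ux|nUx] := pselect (U x).
    by rewrite ud_eq0 // mulr0 oppr0 expR0 mulr1 LS_le_GS ?ltW.
  have [LS_le0|LS_gt0] := leP (LS f x) 0.
    by rewrite (le_trans LS_le0) // mulr_ge0 ?expR_ge0 ?ltW.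
  by apply: le_mul_expRN => //; [exact: ud_ge0 | exact: hbeta].
- rewrite mulrCA -expRD ler_pM2l // ler_expR.
  have := ler_wpM2l (ltW beta_gt0) (ud_neighbour_le _ _ U0 hxy).
  lra.
Qed.
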